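(* Let $G$ be a bridgeless cubic graph with at least one $2$-edge-cut and let $(T,\varphi)$ be a cactus representation of all $2$-edge-cuts of $G$ (as described in the context). Let $\{e_1,e_2\}$ be a $2$-edge-cut of $G$ and let $\{a,b\}$ be the corresponding $2$-edge-cut of $T$. Perform the $\{e_1,e_2\}$-reduction in $G$, obtaining graphs $G_1$ and $G_2$ with new edges $e_1'\in E(G_1)$ and $e_2'\in E(G_2)$. Perform the $\{a,b\}$-reduction in $T$, obtaining graphs $T_1$ and $T_2$ (with $T_i$ the part corresponding to $G_i$), and delete any loop thereby created in $T_1$ or $T_2$. Then $(T_1,\varphi|_{V(G_1)})$ and $(T_2,\varphi|_{V(G_2)})$ are cactus representations of all $2$-edge-cuts of $G_1$ and $G_2$, respectively.
   Context: Graphs may have parallel edges; cubic means every vertex has degree $3$; bridgeless means no edge whose removal disconnects more components. A $2$-edge-cut is an inclusion-minimal edge cut of size $2$; in a bridgeless graph with a $2$-edge-cut the minimum edge cuts are exactly the $2$-edge-cuts. A cactus is a connected graph in which each edge lies on at most one cycle ($2$-cycles allowed, no loops). For a connected graph $G$, a cactus representation is a pair $(T,\varphi)$ with $T$ a cactus and $\varphi:V(G)\to V(T)$ such that (1) for every minimum cut $\{S,V(T)\setminus S\}$ of $T$, the partition $X=\{u:\varphi(u)\in S\}$, $V(G)\setminus X$ is a minimum cut of $G$, and (2) every minimum cut $\{X,V(G)\setminus X\}$ of $G$ arises in this way from some minimum cut of $T$. The cactus representation of all $2$-edge-cuts used here is the one obtained by contracting each $3$-edge-connected component of $G$ (a maximal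 vertex set $X$ with at least $3$ edge-disjoint paths... i.e. local edge-connectivity $\lambda(u,v)\ge 3$ for all $u,v\in X$) to a single node: $\varphi$ maps each vertex to the node of its $3$-edge-connected component, each edge $uv$ of $G$ with $\varphi(u)\neq\varphi(v)$ (an external edge) corresponds to an edge of $T$ joining $\varphi(u)$ and $\varphi(v)$, and two distinct external edges form a $2$-edge-cut of $G$ if and only if their corresponding edges of $T$ lie on a common cycle of $T$; the $2$-edge-cut $\{a,b\}$ of $T$ corresponding to $\{e_1,e_2\}$ consists of the edges corresponding to $e_1,e_2$. For a $2$-edge-cut $\{f_1,f_2\}$ of a graph $H$, $f_1=x_1y_1$, $f_2=x_2y_2$ with $x_1,x_2$ in one component $A$ of $H-\{f_1,f_2\}$ and $y_1,y_2$ in the other component $B$, the $\{f_1,f_2\}$-reduction replaces $f_1,f_2$ by new edges $x_1x_2$ (in $A$) and $y_1y_2$ (in $B$), giving the two graphs $A+x_1x_2$ and $B+y_1y_2$ (the new edge may be a loop in the cactus case when $x_1=x_2$ or $y_1=y_2$). *)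

From HB Require Import structures.
From mathcomp Require Import all_boot.
Set Implicit Arguments. Unset Strict Implicit. Unset Printing Implicit Defensive.

(* A finite multigraph: vertices, edges, and the (ordered, but used as
   unordered) pair of endpoints of each edge. A loop has equal endpoints. *)
Record mgraph := MGraph {
  vert : finType;
  edge : finType;
  endpts : edge -> vert * vert }.

Definition adj (g : mgraph) (F : {set edge g}) : rel (vert g) :=
  fun u v => [exists e, (e \notin F) &&
                ((endpts e == (u, v)) || (endpts e == (v, u)))].

Definition connected (g : mgraph) : Prop :=
  forall u v : vert g, connect (adj set0) u v.

Definition bridgeless (g : mgraph) : Prop :=
  forall (e : edge g) (u v : vert g),
    connect (adj set0) u v -> connect (adj [set e]) u v.

(* degree, a loop counting twice *)
Definition degC (g : mgraph) (C : {set edge g}) (v : vert g) : nat :=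
  #|[set e in C | (endpts e).1 == v]| + #|[set e in C | (endpts e).2 == v]|.

Definition deg (g : mgraph) (v : vert g) : nat := degC [set: edge g] v.

Definition cubic (g : mgraph) : Prop := forall v : vert g, deg v = 3.

Definition crossing (g : mgraph) (X : {set vert g}) : {set edge g} :=
  [set e | ((endpts e).1 \in X) != ((endpts e).2 \in X)].

Definition edge_cut (g : mgraph) (F : {set edge g}) : Prop :=
  exists X : {set vert g}, [/\ X != set0, X != setT & F = crossing X].

Definition two_edge_cut (g : mgraph) (F : {set edge g}) : Prop :=
  [/\ edge_cut F, #|F| = 2 &
      forall F' : {set edge g}, F' \proper F -> ~ edge_cut F'].

Definition lambda_ge (g : mgraph) (k : nat) (u v : vert g) : Prop :=
  forall X : {set vert g}, u \in X -> v \notin X -> k <= #|crossing X|.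

(* C is (the edge set of) a cycle: a nonempty connected 2-regular subgraph;
   loops (1-cycles) and 2-cycles of parallel edges are included *)
Definition is_cycle (g : mgraph) (C : {set edge g}) : Prop :=
  [/\ C != set0,
      forall v : vert g, degC C v = 0 \/ degC C v = 2 &
      forall u v : vert g, 0 < degC C u -> 0 < degC C v ->
        connect (adj (~: C)) u v].

Definition cactus (g : mgraph) : Prop :=
  [/\ connected g,
      forall e : edge g, (endpts e).1 != (endpts e).2 &
      forall (e : edge g) (C1 C2 : {set edge g}),
        is_cycle C1 -> is_cycle C2 -> e \in C1 -> e \in C2 -> C1 = C2].

Definition cactus_rep2 (g T : mgraph) (phi : vert g -> vert T) : Prop :=
  cactus T /\
  (forall S : {set vert T}, S != set0 -> S != setT -> #|crossing S| = 2 ->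
     let X := [set u | phi u \in S] in
     [/\ X != set0, X != setT & #|crossing X| = 2]) /\
  (forall X : {set vert g}, X != set0 -> X != setT -> #|crossing X| = 2 ->
     exists S : {set vert T}, [/\ S != set0, S != setT, #|crossing S| = 2 &
        X = [set u | phi u \in S]]).

(* Reduction: the component of r in g - F, plus a new edge r s;
   if dl is true, the new edge is deleted when it is a loop (r = s). *)
Definition rcomp (g : mgraph) (F : {set edge g}) (r : vert g) : {set vert g} :=
  [set v | connect (adj F) r v].

Lemma r_in_rcomp (g : mgraph) (F : {set edge g}) (r : vert g) : r \in rcomp F r.
Proof. by rewrite inE connect0. Qed.

Definition rvert (g : mgraph) (F : {set edge g}) (r : vert g) : finType :=
  {v : vert g | v \in rcomp F r}.

Definition rbase (g : mgraph) (F : {set edge g}) (r : vert g) : rvert F r :=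
  exist _ r (r_in_rcomp F r).

Definition old_edge (g : mgraph) (F : {set edge g}) (r : vert g) : finType :=
  {e : edge g | [&& e \notin F, (endpts e).1 \in rcomp F r
                            & (endpts e).2 \in rcomp F r]}.

Definition redge (g : mgraph) (F : {set edge g}) (r s : vert g) (dl : bool)
  : finType :=
  {o : option (old_edge F r) | ~~ [&& dl, o == None & r == s]}.

Definition rends (g : mgraph) (F : {set edge g}) (r s : vert g) (dl : bool)
  (o : redge F r s dl) : rvert F r * rvert F r :=
  match val o with
  | Some e => (insubd (rbase F r) (endpts (val e)).1,
               insubd (rbase F r) (endpts (val e)).2)
  | None => (rbase F r, insubd (rbase F r) s)
  end.

Definition reduce (g : mgraph) (F : {set edge g}) (r s : vert g) (dl : bool)
  : mgraph := @MGraph (rvert F r) (redge F r s dl) (@rends g F r s dl).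

From HB Require Import structures.
From mathcomp Require Import all_boot.
Set Implicit Arguments. Unset Strict Implicit. Unset Printing Implicit Defensive.

(* If the cut {a, b} of the cactus T lies on the cycle D, a cycle of the reduced
   cactus T1 either avoids the new edge, and is a cycle of T, or uses it, and
   becomes a cycle of T once the new edge is replaced by the arc of D on the far
   side of the cut; distinct cycles expand to distinct cycles, so T1 is again a
   cactus.  On the side A of G, phi is still a contraction of G1 onto T1, and a
   2-edge-cut of G1 separating two vertices with the same image would lift, by
   merging everything outside A into the side of x1, to a 2-edge-cut of G
   separating two vertices of one 3-edge-connected class.  A contraction onto a
   cactus whose classes no 2-edge-cut separates represents all 2-edge-cuts. *)

Lemma card_set_in_sum (T : finType) (A : {set T}) (P : pred T) :
  #|[set x in A | P x]| = \sum_(x in A) P x.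
Proof.
rewrite -sum1_card big_mkcond [RHS]big_mkcond /=; apply: eq_bigr => x _.
by rewrite !inE; case: (x \in A); case: (P x).
Qed.

Lemma sum_eq_mem (T : finType) (Z : {set T}) x : \sum_(v in Z) ((x == v) : nat) = (x \in Z).
Proof.
have [xZ|xZ] := boolP (x \in Z); last first.
  by rewrite big1 // => v vZ; apply/eqP; rewrite eqb0; apply: contraNneq xZ => ->.
by rewrite (bigD1 x) //= eqxx big1 // => v /andP [_ /negbTE]; rewrite eq_sym => ->.
Qed.

Lemma odd_sum (I : finType) (A : {pred I}) (F : I -> nat) :
  odd (\sum_(i in A) F i) = \big[addb/false]_(i in A) odd (F i).
Proof. exact: (big_morph odd oddD). Qed.

Section Cuts.
Variable g : mgraph.
Implicit Types (F C : {set edge g}) (u v r : vert g) (e : edge g).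

Lemma adjC F : symmetric (adj F).
Proof. by move=> u v; apply/existsP/existsP => -[e He]; exists e; rewrite orbC. Qed.

Lemma connect_adjC F : connect_sym (adj F).
Proof. exact/sym_connect_sym/adjC. Qed.

Lemma adj_endpts F e : e \notin F -> adj F (endpts e).1 (endpts e).2.
Proof. by move=> eF; apply/existsP; exists e; rewrite eF -surjective_pairing eqxx. Qed.

Lemma crossing_rcomp F r : crossing (rcomp F r) \subset F.
Proof.
apply/subsetP => e; rewrite inE; apply: contraR => /adj_endpts hadj.
rewrite !inE; apply/eqP; apply/idP/idP => h; apply: connect_trans h (connect1 _) => //.
by rewrite adjC.
Qed.

Lemma rcomp_endpts F r e : e \notin F ->
  ((endpts e).1 \in rcomp F r) = ((endpts e).2 \in rcomp F r).
Proof.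
move=> eF; apply/eqP; apply: contraNT eF => cross_e.
by apply: (subsetP (crossing_rcomp F r)); rewrite inE.
Qed.

Lemma in_crossing (X : {set vert g}) e :
  (e \in crossing X) = (((endpts e).1 \in X) != ((endpts e).2 \in X)).
Proof. by rewrite in_set. Qed.

Lemma connect_cutP F u v :
  reflect (forall Y : {set vert g}, u \in Y -> crossing Y \subset F -> v \in Y)
          (connect (adj F) u v).
Proof.
apply: (iffP idP) => [/connectP [p pth ->] Y uY cY | Hcut]; last first.
  by have := Hcut _ (r_in_rcomp F u) (crossing_rcomp F u); rewrite inE.
elim: p u pth uY => [|w p IHp] u //= /andP [/existsP [e /andP [eF he]] pth] uY.
apply: IHp pth _; apply: contraNT eF => wY; apply: (subsetP cY).
by rewrite inE; case/orP: he => /eqP -> /=; rewrite uY (negbTE wY).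
Qed.

Lemma degCE C v : degC C v = \sum_(e in C) (((endpts e).1 == v) + ((endpts e).2 == v)).
Proof. by rewrite /degC !card_set_in_sum big_split. Qed.

Lemma degC_set1 e v : degC [set e] v = ((endpts e).1 == v) + ((endpts e).2 == v).
Proof. by rewrite degCE big_set1. Qed.

Lemma degC_setU C1 C2 v :
  [disjoint C1 & C2] -> degC (C1 :|: C2) v = degC C1 v + degC C2 v.
Proof. by move=> dC; rewrite !degCE -bigU //; apply: eq_bigl => e; rewrite !inE. Qed.

Lemma degC_eq0 C v :
  (forall e, e \in C -> ((endpts e).1 != v) && ((endpts e).2 != v)) -> degC C v = 0.
Proof. by move=> Cv; rewrite degCE big1 // => e /Cv /andP [/negbTE -> /negbTE ->]. Qed.

Lemma degC_set0 v : degC set0 v = 0.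
Proof. by apply: degC_eq0 => e; rewrite inE. Qed.

Lemma degC_gt0 C e v :
  e \in C -> ((endpts e).1 == v) || ((endpts e).2 == v) -> 0 < degC C v.
Proof.
by move=> eC ev; rewrite degCE (bigD1 e) //=; case/orP: ev => ->; rewrite ?addnA ?addn1.
Qed.

Lemma cycle_crossing_even C (Z : {set vert g}) :
  (forall v, degC C v = 0 \/ degC C v = 2) -> ~~ odd #|C :&: crossing Z|.
Proof.
move=> degC02.
have sum_ends : \sum_(v in Z) degC C v =
    \sum_(e in C) (((endpts e).1 \in Z) + ((endpts e).2 \in Z)).
  rewrite (eq_bigr _ (fun v _ => degCE C v)) exchange_big /=.
  by apply: eq_bigr => e _; rewrite big_split /= !sum_eq_mem.
have sum_even : ~~ odd (\sum_(v in Z) degC C v).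
  by rewrite odd_sum big1 // => v _; case: (degC02 v) => ->.
have -> : C :&: crossing Z = [set e in C | e \in crossing Z].
  by apply/setP => e; rewrite !inE.
rewrite card_set_in_sum odd_sum; move: sum_even; rewrite sum_ends odd_sum.
by congr (~~ _); apply: eq_bigr => e _; rewrite inE; case: (_ \in Z); case: (_ \in Z).
Qed.

End Cuts.

Lemma degC_imset (g h : mgraph) (f : edge h -> edge g) (k : vert h -> vert g)
    (B : {set edge h}) (w : vert h) :
  injective k -> {in B &, injective f} ->
  (forall o, o \in B -> endpts (f o) = (k (endpts o).1, k (endpts o).2)) ->
  degC (f @: B) (k w) = degC B w.
Proof.
move=> k_inj f_inj f_ends; rewrite !degCE big_imset //; apply: eq_bigr => o oB.
by rewrite f_ends //= !(inj_eq k_inj).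
Qed.

Definition contraction (g t : mgraph) (f : vert g -> vert t) (p : edge t -> edge g) :=
  [/\ forall y, exists u, f u = y, injective p,
      forall e, f (endpts e).1 != f (endpts e).2 -> exists x, p x = e &
      forall x, endpts x = (f (endpts (p x)).1, f (endpts (p x)).2)].

Section Contraction.
Variables (g t : mgraph) (f : vert g -> vert t) (p : edge t -> edge g).
Hypothesis fp : contraction f p.

Lemma crossing_preimset (S : {set vert t}) :
  crossing [set u | f u \in S] = p @: crossing S.
Proof.
have [_ _ p_onto p_ends] := fp.
apply/setP => e; rewrite !inE; apply/idP/imsetP => [cross_e | [x]].
  have [|x ex] := p_onto e; first by apply: contraNneq cross_e => ->.
  by exists x; rewrite // inE p_ends /= ex.
by move=> + ->; rewrite inE p_ends.
Qed.

Lemma card_crossing_preimset (S : {set vert t}) :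
  #|crossing [set u | f u \in S]| = #|crossing S|.
Proof. by have [_ p_inj _ _] := fp; rewrite crossing_preimset card_imset. Qed.

Lemma connect_contraction (F : {set edge t}) u v :
  connect (adj (p @: F)) u v -> connect (adj F) (f u) (f v).
Proof.
move=> /connect_cutP uv; apply/connect_cutP => Y uY cY.
have := uv [set w | f w \in Y]; rewrite !inE; apply=> //.
by rewrite crossing_preimset imsetS.
Qed.

Lemma cactus_rep2_contraction :
  cactus t ->
  (forall u v (X : {set vert g}), f u = f v -> u \in X -> v \notin X ->
     #|crossing X| != 2) ->
  cactus_rep2 f.
Proof.
move=> cactus_t classes_uncut; have [f_onto _ _ _] := fp; split=> //; split.
  move=> S /set0Pn [y yS]; rewrite -properT => /properP [_ [z _ zS]] cS /=.
  have [u fu] := f_onto y; have [w fw] := f_onto z.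
  split; last by rewrite card_crossing_preimset.
    by apply/set0Pn; exists u; rewrite inE fu.
  by apply/eqP => /setP/(_ w); rewrite !inE fw (negbTE zS).
move=> X /set0Pn [u uX] XT cX.
have defX : X = [set w | f w \in f @: X].
  apply/setP => w; rewrite inE; apply/idP/imsetP => [wX | [v vX fwv]]; first by exists w.
  by apply: contraT => wX; have := classes_uncut _ _ _ (esym fwv) vX wX; rewrite cX.
exists (f @: X); split; last exact: defX.
- by apply/set0Pn; exists (f u); exact: imset_f.
- by apply: contraNneq XT => fXT; rewrite defX fXT; apply/eqP/setP => w; rewrite !inE.
- by rewrite -card_crossing_preimset -defX.
Qed.

End Contraction.

Section Reduction.
Variables (g : mgraph) (F : {set edge g}) (r s : vert g) (dl : bool).
Local Notation R := (reduce F r s dl).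

Lemma old_edge_not_new (e : old_edge F r) : ~~ [&& dl, Some e == None & r == s].
Proof. by apply/negP => /and3P [_ /eqP]. Qed.

Definition old_redge (e : old_edge F r) : edge R := Sub (Some e) (old_edge_not_new e).

Lemma endpts_old_redge (o : edge R) e :
  val o = Some e -> endpts (val e) = (val (endpts o).1, val (endpts o).2).
Proof.
case: o => [[e'|] ?] //= [<-]; case/and3P: (valP e') => _ e1 e2.
by rewrite /rends /= !insubdK // -surjective_pairing.
Qed.

Lemma endpts_new_redge (o : edge R) :
  val o = None -> s \in rcomp F r -> val (endpts o).1 = r /\ val (endpts o).2 = s.
Proof. by case: o => [[e|] ?] //= _ sr; rewrite /rends /= insubdK. Qed.

Lemma reduce_connected : connected R.
Proof.
move=> u v; apply/connect_cutP => Y uY cY.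
have old_uncut (o : edge R) : ((endpts o).1 \in Y) = ((endpts o).2 \in Y).
  apply/eqP; apply: contraT => cross_o.
  by have := subsetP cY o; rewrite !inE cross_o => /(_ isT).
have memY (w : vert R) : (val w \in val @: Y) = (w \in Y) := mem_imset _ _ val_inj.
rewrite -memY.
have: connect (adj F) (val u) (val v).
  have := valP u; have := valP v; rewrite !inE => rv ru.
  by apply: connect_trans rv; rewrite connect_adjC.
move/connect_cutP; apply; first exact: imset_f.
apply/subsetP => e; rewrite inE; apply: contraR => eF.
have [e1r | e1r] := boolP ((endpts e).1 \in rcomp F r); last first.
  have outY x : x \notin rcomp F r -> (x \in val @: Y) = false.
    by move=> xr; apply: contraNF xr => /imsetP [w _ ->]; exact: valP.
  by rewrite !outY // -(rcomp_endpts r eF).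
have e2r : (endpts e).2 \in rcomp F r by rewrite -rcomp_endpts.
have olde : [&& e \notin F, (endpts e).1 \in rcomp F r & (endpts e).2 \in rcomp F r].
  by rewrite eF e1r e2r.
have := endpts_old_redge (o := old_redge (Sub e olde)) erefl.
rewrite SubK => ->; rewrite !memY.
by have := old_uncut (old_redge (Sub e olde)) => ->.
Qed.

End Reduction.

Section CactusReduction.
Variables (T : mgraph) (a b : edge T) (r s ra sb : vert T) (D : {set edge T}).
Local Notation F := [set a; b].
Local Notation TA := (rcomp [set a; b] r).
Local Notation T1 := (reduce [set a; b] r s true).
Hypotheses (a_neq_b : a != b)
  (ends_a : endpts a = (r, ra) \/ endpts a = (ra, r))
  (ends_b : endpts b = (s, sb) \/ endpts b = (sb, s))
  (s_in : s \in TA) (ra_out : ra \notin TA) (sb_out : sb \notin TA)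
  (cycD : is_cycle D) (aD : a \in D) (bD : b \in D).

Implicit Types (C : {set edge T1}) (o : edge T1) (t : edge T) (x : vert T).

Let r_in : r \in TA := r_in_rcomp F r.
Let aF : a \in F. Proof. by rewrite !inE eqxx. Qed.
Let bF : b \in F. Proof. by rewrite !inE eqxx orbT. Qed.

Definition is_new (o : edge T1) := val o == None.

Definition base_edge (o : edge T1) : edge T := if val o is Some t then val t else a.

Lemma base_edge_old o : ~~ is_new o ->
  [/\ endpts (base_edge o) = (val (endpts o).1, val (endpts o).2), base_edge o \notin F,
      (endpts (base_edge o)).1 \in TA & (endpts (base_edge o)).2 \in TA].
Proof.
case: o => [[[t ht]|] ho] //= _; case/and3P: (ht) => tF t1 t2.
by rewrite /rends /= !insubdK // -surjective_pairing.
Qed.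

Lemma endpts_new o : is_new o -> [/\ r != s, val (endpts o).1 = r & val (endpts o).2 = s].
Proof. by case: o => [[t|] ho] //= _; move: ho; rewrite eqxx /= => rs; rewrite insubdK. Qed.

Lemma base_edge_inj : {in [pred o | ~~ is_new o] &, injective base_edge}.
Proof.
move=> [[[t1 h1]|] o1] [[[t2 h2]|] o2] //= _ _ t12.
by apply: val_inj; congr Some; apply: val_inj.
Qed.

Lemma is_new_uniq o1 o2 : is_new o1 -> is_new o2 -> o1 = o2.
Proof. by move=> /eqP o1N /eqP o2N; apply: val_inj; rewrite o1N o2N. Qed.

Definition outer_arc : {set edge T} :=
  [set t in D | ((endpts t).1 \notin TA) || ((endpts t).2 \notin TA)].

Lemma base_edge_not_outer o : ~~ is_new o -> base_edge o \notin outer_arc.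
Proof. by case/base_edge_old => _ _ t1 t2; rewrite /outer_arc in_set t1 t2 andbF. Qed.

Lemma a_outer : a \in outer_arc.
Proof. by rewrite inE aD; case: ends_a => -> /=; rewrite ra_out ?orbT. Qed.

Lemma b_outer : b \in outer_arc.
Proof. by rewrite inE bD; case: ends_b => -> /=; rewrite sb_out ?orbT. Qed.

Lemma outer_arc_out t : t \in outer_arc -> t \notin F ->
  ((endpts t).1 \notin TA) && ((endpts t).2 \notin TA).
Proof.
by rewrite inE => /andP [_ out_t] tF; move: out_t; rewrite (rcomp_endpts r tF) orbb => ->.
Qed.

Lemma inner_arc_in t : t \in D -> t \notin outer_arc ->
  ((endpts t).1 \in TA) && ((endpts t).2 \in TA).
Proof. by move=> tD; rewrite inE tD /= negb_or !negbK. Qed.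

Lemma degC_outer_arc_in x : x \in TA -> degC outer_arc x = (r == x) + (s == x).
Proof.
move=> xT; have out_neq y : y \notin TA -> (y == x) = false.
  by move=> yT; apply: contraNF yT => /eqP ->.
have -> : outer_arc = [set a] :|: ([set b] :|: (outer_arc :\: F)).
  apply/setP => t; rewrite !in_setU !in_set1 in_setD in_set2.
  have [->|_] := eqVneq t a; first by rewrite a_outer.
  by have [->|] := eqVneq t b; rewrite ?b_outer.
rewrite degC_setU; last by rewrite disjoints1 in_setU in_set1 in_setD aF (negbTE a_neq_b).
rewrite degC_setU; last by rewrite disjoints1 in_setD bF.
rewrite (@degC_eq0 _ (outer_arc :\: F)); last first.
  by move=> t; rewrite inE => /andP [tF /outer_arc_out/(_ tF) /andP [t1 t2]]; rewrite !out_neq.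
rewrite !degC_set1 addn0.
by case: ends_a => ->; case: ends_b => -> /=;
  rewrite (out_neq _ ra_out) (out_neq _ sb_out) ?addn0 ?add0n.
Qed.

Lemma degC_outer_arc_out x : x \notin TA -> degC outer_arc x = degC D x.
Proof.
move=> xT; have -> : D = outer_arc :|: (D :\: outer_arc).
  apply/setP => t; rewrite in_setU in_setD.
  by case: (boolP (t \in outer_arc)); rewrite // inE => /andP [].
rewrite degC_setU; last by rewrite -setI_eq0 setIDA setIC -setIDA setDv setI0.
rewrite [degC (_ :\: _) x]degC_eq0 ?addn0 // => t /[!in_setD] /andP [tout tD].
case/andP: (inner_arc_in tD tout) => t1 t2.
by apply/andP; split; apply: contraNneq xT => <-.
Qed.

Definition uses_new (C : {set edge T1}) := [exists o in C, is_new o].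

(* A cycle of [T1] expands to a cycle of [T]: the new edge [rs], if used, is
   replaced by the arc of [D] outside [TA]. *)
Definition expand (C : {set edge T1}) : {set edge T} :=
  base_edge @: [set o in C | ~~ is_new o] :|: (if uses_new C then outer_arc else set0).

Lemma uses_newE C o : is_new o -> (o \in C) = uses_new C.
Proof.
move=> o_new; apply/idP/existsP => [oC | [o' /andP [o'C o'_new]]].
  by exists o; rewrite oC.
by rewrite (is_new_uniq o_new o'_new).
Qed.

Lemma mem_expand_old C o : ~~ is_new o -> (base_edge o \in expand C) = (o \in C).
Proof.
move=> o_old; rewrite in_setU; apply/idP/idP => [|oC]; last by rewrite imset_f // inE oC.
case/orP => [/imsetP [o' /[!inE] /andP [o'C o'_old] /base_edge_inj eqo] | ].
  by rewrite eqo ?inE.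
by case: (uses_new C); rewrite ?in_set0 // (negbTE (base_edge_not_outer o_old)).
Qed.

Lemma mem_expand_a C : (a \in expand C) = uses_new C.
Proof.
rewrite in_setU; case: (uses_new C); rewrite ?a_outer ?orbT ?inE ?orbF //.
apply/imsetP => -[o /[!inE] /andP [_ o_old] aE].
by case: (base_edge_old o_old); rewrite -aE aF.
Qed.

Lemma expand_disjoint C :
  [disjoint base_edge @: [set o in C | ~~ is_new o]
           & (if uses_new C then outer_arc else set0)].
Proof.
rewrite -setI_eq0; apply/eqP/setP => t; rewrite !inE; apply/negbTE/negP.
case/andP => /imsetP [o /[!inE] /andP [_ o_old] ->].
by case: (uses_new C); rewrite ?in_set0 // (negbTE (base_edge_not_outer o_old)).
Qed.

Lemma degC_expand_in C w : degC (expand C) (val w) = degC C w.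
Proof.
rewrite degC_setU ?expand_disjoint // degC_imset //; first last.
- by move=> o /[!inE] /andP [_ /base_edge_old []].
- by move=> o1 o2 /[!inE] /andP [_ o1_old] /andP [_ o2_old]; apply: base_edge_inj.
- exact: val_inj.
have -> : degC C w = degC [set o in C | ~~ is_new o] w + degC [set o in C | is_new o] w.
  rewrite -degC_setU; last first.
    by rewrite -setI_eq0; apply/eqP/setP => o; rewrite !inE andbACA andNb andbF.
  by congr degC; apply/setP => o; rewrite !inE -andb_orr orNb andbT.
congr addn; rewrite /uses_new; case: existsP => [[n /andP [nC n_new]] | no_new].
  have -> : [set o in C | is_new o] = [set n].
    by apply/setP => o; rewrite !inE; apply/andP/eqP => [[_ /is_new_uniq/(_ n_new)] | ->].
  case: (endpts_new n_new) => _ n1 n2.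
  by rewrite degC_set1 degC_outer_arc_in ?(valP w) // -!val_eqE n1 n2.
have -> : [set o in C | is_new o] = set0.
  by apply/setP => o; rewrite !inE; apply/negP => oC; apply: no_new; exists o.
by rewrite !degC_set0.
Qed.

Lemma degC_expand_out C x :
  x \notin TA -> degC (expand C) x = if uses_new C then degC D x else 0.
Proof.
move=> xT; rewrite degC_setU ?expand_disjoint // degC_eq0; last first.
  move=> t /imsetP [o /[!inE] /andP [_ o_old] ->]; case: (base_edge_old o_old) => _ _ t1 t2.
  by apply/andP; split; apply: contraNneq xT => <-.
by case: (uses_new C); rewrite ?degC_outer_arc_out ?degC_set0.
Qed.

Section ExpandConnected.
Variables (C : {set edge T1}) (Y : {set vert T}).
Hypotheses (cycC : is_cycle C)
  (Y_uncut : forall t, t \in expand C -> ((endpts t).1 \in Y) = ((endpts t).2 \in Y)).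

Lemma ra_same_side : uses_new C -> (r \in Y) = (ra \in Y).
Proof. by rewrite -mem_expand_a => /Y_uncut; case: ends_a => ->. Qed.

Lemma sb_same_side : uses_new C -> (s \in Y) = (sb \in Y).
Proof.
move=> C_new; have /Y_uncut : b \in expand C by rewrite in_setU C_new b_outer orbT.
by case: ends_b => ->.
Qed.

(* Otherwise the cycle [D] would cross [TA :|: Y] exactly once, at [a] or at [b]. *)
Lemma rs_same_side : uses_new C -> (r \in Y) = (s \in Y).
Proof.
move=> C_new; rewrite (ra_same_side C_new) (sb_same_side C_new).
apply/eqP; apply: contraT => side.
pose Z := [set x | (x \in TA) || (x \in Y)].
have inZ x : (x \in Z) = (x \in TA) || (x \in Y) by rewrite in_set.
have [_ degD _] := cycD; have := cycle_crossing_even Z degD.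
have -> : D :&: crossing Z = [set t in F | t \in crossing Z].
  apply/setP => t; rewrite in_setI [in RHS]inE.
  have [tF | tF] := boolP (t \in F).
    by move: tF; rewrite in_set2 => /orP [] /eqP ->; rewrite ?aD ?bD.
  apply/negbTE/nandP; have [tD | tD] := boolP (t \in D); [right | by left].
  rewrite in_crossing negbK !inZ.
  have [t_out | t_in] := boolP (t \in outer_arc); last first.
    by case/andP: (inner_arc_in tD t_in) => -> ->.
  case/andP: (outer_arc_out t_out tF) => /negbTE -> /negbTE -> /=.
  by apply/eqP; apply: Y_uncut; rewrite in_setU C_new t_out orbT.
have cross_a : (a \in crossing Z) = (ra \notin Y).
  by rewrite in_crossing !inZ; case: ends_a => -> /=; rewrite r_in (negbTE ra_out) //= eq_sym.
have cross_b : (b \in crossing Z) = (sb \notin Y).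
  by rewrite in_crossing !inZ; case: ends_b => -> /=; rewrite s_in (negbTE sb_out) //= eq_sym.
rewrite card_set_in_sum big_setU1 ?in_set1 // big_set1 /= cross_a cross_b.
by move: side; case: (ra \in Y); case: (sb \in Y).
Qed.

Lemma inner_closed w1 w2 :
  val w1 \in Y -> 0 < degC C w1 -> 0 < degC C w2 -> val w2 \in Y.
Proof.
case: cycC => _ _ C_conn w1Y d1 d2.
have /connect_cutP/(_ [set w | val w \in Y]) := C_conn w1 w2 d1 d2.
rewrite !inE; apply=> // {w1 w2 w1Y d1 d2}.
apply/subsetP => o; rewrite !inE; apply: contraNN => oC.
have [o_new | o_old] := boolP (is_new o).
  case: (endpts_new o_new) => _ -> ->.
  by rewrite rs_same_side // -(uses_newE _ o_new).
case: (base_edge_old o_old) => ends_o _ _ _.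
by rewrite -(mem_expand_old C o_old) in oC; have := Y_uncut oC; rewrite ends_o => ->.
Qed.

Let Y2 := [set x | if x \in TA then r \in Y else x \in Y].
Let inY2 x : (x \in Y2) = if x \in TA then r \in Y else x \in Y.
Proof. by rewrite in_set. Qed.

Lemma outer_closed x1 x2 :
  uses_new C -> x1 \in Y2 -> 0 < degC D x1 -> 0 < degC D x2 -> x2 \in Y2.
Proof.
case: cycD => _ _ D_conn C_new x1Y d1 d2.
have /connect_cutP/(_ Y2) := D_conn x1 x2 d1 d2.
apply=> // {x1 x2 x1Y d1 d2}; apply/subsetP => t; rewrite in_setC; apply: contraTN => tD.
rewrite in_crossing negbK !inY2.
have [t_out | t_in] := boolP (t \in outer_arc); last first.
  by case/andP: (inner_arc_in tD t_in) => -> ->.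
have [tF | tF] := boolP (t \in F); last first.
  case/andP: (outer_arc_out t_out tF) => /negbTE -> /negbTE ->.
  by apply/eqP/Y_uncut; rewrite in_setU C_new t_out orbT.
move: tF; rewrite in_set2 => /orP [] /eqP ->.
  by case: ends_a => -> /=; rewrite r_in (negbTE ra_out) ra_same_side.
by case: ends_b => -> /=; rewrite s_in (negbTE sb_out) rs_same_side ?sb_same_side.
Qed.

Lemma degC_new_endpoint : uses_new C -> 0 < degC C (rbase F r).
Proof.
case/existsP => n /andP [nC n_new]; apply: (degC_gt0 nC).
by case: (endpts_new n_new) => _ n1 _; rewrite -val_eqE n1 eqxx.
Qed.

Lemma expand_connected u v :
  0 < degC (expand C) u -> 0 < degC (expand C) v -> u \in Y -> v \in Y.
Proof.
have degC_in x (xT : x \in TA) : degC (expand C) x = degC C (Sub x xT) :=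
  degC_expand_in C (Sub x xT).
have degD_r : 0 < degC D r.
  by apply: (degC_gt0 aD); case: ends_a => -> /=; rewrite eqxx ?orbT.
have [C_new | C_old] := boolP (uses_new C); last first.
  have inTA x : 0 < degC (expand C) x -> x \in TA.
    by apply: contraTT => xT; rewrite degC_expand_out // (negbTE C_old).
  move=> du dv uY; have uT := inTA _ du; have vT := inTA _ dv.
  rewrite degC_in in du; rewrite degC_in in dv.
  exact: (@inner_closed (Sub u uT) (Sub v vT) uY du dv).
move=> du dv uY; have rY : r \in Y.
  have [uT | uT] := boolP (u \in TA).
    rewrite degC_in in du.
    exact: (@inner_closed (Sub u uT) (rbase F r) uY du (degC_new_endpoint C_new)).
  rewrite degC_expand_out // C_new in du.
  by have := @outer_closed u r C_new; rewrite !inY2 r_in (negbTE uT); apply.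
have [vT | vT] := boolP (v \in TA).
  rewrite degC_in in dv.
  exact: (@inner_closed (rbase F r) (Sub v vT) rY (degC_new_endpoint C_new) dv).
rewrite degC_expand_out // C_new in dv.
by have := @outer_closed r v C_new; rewrite !inY2 r_in (negbTE vT); apply.
Qed.

End ExpandConnected.

Lemma expand_cycle C : is_cycle C -> is_cycle (expand C).
Proof.
move=> cycC; have [C_ne degC02 _] := cycC; split.
- case/set0Pn: C_ne => o oC; apply/set0Pn.
  have [o_new | o_old] := boolP (is_new o).
    by exists a; rewrite mem_expand_a -(uses_newE _ o_new).
  by exists (base_edge o); rewrite mem_expand_old.
- move=> x; have [xT | xT] := boolP (x \in TA).
    by have /= -> := degC_expand_in C (Sub x xT); apply: degC02.
  by rewrite degC_expand_out //; case: (uses_new C); [case: cycD | left].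
- move=> u v du dv; apply/connect_cutP => Y uY cY.
  apply: (expand_connected cycC _ du dv uY) => t tC; apply/eqP.
  by apply: contraTT tC => cross_t; rewrite -in_setC; apply: (subsetP cY); rewrite in_crossing.
Qed.

Lemma reduce_cactus : cactus T -> cactus T1.
Proof.
case=> _ loopless one_cycle; split; first exact: reduce_connected.
  move=> o; have [o_new | o_old] := boolP (is_new o).
    by case: (endpts_new o_new) => rs o1 o2; rewrite -val_eqE o1 o2.
  case: (base_edge_old o_old) => ends_o _ _ _.
  by have := loopless (base_edge o); rewrite ends_o.
move=> o C1 C2 cyc1 cyc2 oC1 oC2.
have expand_eq : expand C1 = expand C2.
  have [o_new | o_old] := boolP (is_new o).
    by apply: (one_cycle a _ _ (expand_cycle cyc1) (expand_cycle cyc2));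
      rewrite mem_expand_a -(uses_newE _ o_new).
  by apply: (one_cycle (base_edge o) _ _ (expand_cycle cyc1) (expand_cycle cyc2));
    rewrite mem_expand_old.
apply/setP => o'; have [o'_new | o'_old] := boolP (is_new o').
  by rewrite !(uses_newE _ o'_new) -!mem_expand_a expand_eq.
by rewrite -!(mem_expand_old _ o'_old) expand_eq.
Qed.

End CactusReduction.

Section ReductionSide.
Variables (G T : mgraph) (phi : vert G -> vert T) (psi : edge T -> edge G).
Hypotheses (contr : contraction phi psi) (cactusT : cactus T)
  (phi_lambda : forall u v, phi u = phi v -> lambda_ge 3 u v).
Variables (e1 e2 : edge G) (x1 y1 x2 y2 : vert G) (a b : edge T) (D : {set edge T}).
Local Notation F := [set e1; e2].
Local Notation A := (rcomp [set e1; e2] x1).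
Local Notation TA := (rcomp [set a; b] (phi x1)).
Local Notation G1 := (reduce [set e1; e2] x1 x2 false).
Local Notation T1 := (reduce [set a; b] (phi x1) (phi x2) true).
Hypotheses (e1_neq_e2 : e1 != e2)
  (e1_ends : (endpts e1 == (x1, y1)) || (endpts e1 == (y1, x1)))
  (e2_ends : (endpts e2 == (x2, y2)) || (endpts e2 == (y2, x2)))
  (x1x2 : connect (adj F) x1 x2) (y1y2 : connect (adj F) y1 y2)
  (x1y1 : ~~ connect (adj F) x1 y1)
  (psi_a : psi a = e1) (psi_b : psi b = e2)
  (cycD : is_cycle D) (aD : a \in D) (bD : b \in D).

Let x2_in : x2 \in A. Proof. by rewrite inE. Qed.
Let y1_out : y1 \notin A. Proof. by rewrite inE. Qed.
Let y2_out : y2 \notin A.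
Proof. by rewrite inE; apply: contra x1y1 => /connect_trans; apply; rewrite connect_adjC. Qed.
Let e2F : e2 \in F. Proof. by rewrite !inE eqxx orbT. Qed.
Let x1' : vert G1 := rbase F x1.
Let psi_inj : injective psi. Proof. by case: contr. Qed.
Let psi_ends t : endpts t = (phi (endpts (psi t)).1, phi (endpts (psi t)).2).
Proof. by case: contr. Qed.
Let psi_F : psi @: [set a; b] = F. Proof. by rewrite imsetU !imset_set1 psi_a psi_b. Qed.

(* Only the two edges of [F] leave [A]: too few to separate a 3-edge-connected class. *)
Lemma phi_class_side u v : phi u = phi v -> (u \in A) = (v \in A).
Proof.
have cutA : #|crossing A| < 3.
  by apply: leq_ltn_trans (subset_leq_card (crossing_rcomp F x1)) _; rewrite cards2 e1_neq_e2.
move=> uv; apply/idP/idP => [uA | vA]; apply: contraTT cutA; rewrite -leqNgt => notA.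
  exact: phi_lambda uv A uA notA.
exact: phi_lambda (esym uv) A vA notA.
Qed.

Lemma preimset_phi_A : [set u | phi u \in phi @: A] = A.
Proof.
apply/setP => u; rewrite inE; apply/imsetP/idP => [[w wA /phi_class_side ->] // | uA].
by exists u.
Qed.

Lemma mem_rcomp_phi x : (phi x \in TA) = (x \in A).
Proof.
apply/idP/idP => [| x1x]; last first.
  by move: x1x; rewrite !inE -psi_F; apply: (connect_contraction contr).
rewrite -preimset_phi_A inE [in X in X -> _]inE => /connect_cutP; apply.
  exact: imset_f (r_in_rcomp F x1).
apply/subsetP => t cross_t; rewrite -(mem_imset _ _ psi_inj) psi_F.
apply: (subsetP (crossing_rcomp F x1)).
by rewrite -preimset_phi_A (crossing_preimset contr) imset_f.
Qed.

Lemma psi_old_edge (t : old_edge [set a; b] (phi x1)) :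
  [&& psi (val t) \notin F, (endpts (psi (val t))).1 \in A & (endpts (psi (val t))).2 \in A].
Proof.
case/and3P: (valP t); rewrite psi_ends /= !mem_rcomp_phi => tF -> ->.
by rewrite -psi_F (mem_imset _ _ psi_inj) tF.
Qed.

Definition phi1 (v : vert G1) : vert T1 := insubd (rbase [set a; b] (phi x1)) (phi (val v)).

Definition psi1 (o : edge T1) : edge G1 :=
  Sub (omap (fun t => Sub (psi (val t)) (psi_old_edge t)) (val o)) isT.

Lemma phi1E v : val (phi1 v) = phi (val v).
Proof. by rewrite insubdK // mem_rcomp_phi (valP v). Qed.

Lemma phi1_onto w : exists v, phi1 v = w.
Proof.
have [phi_onto _ _ _] := contr; have [u uw] := phi_onto (val w).
have uA : u \in A by rewrite -mem_rcomp_phi uw (valP w).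
by exists (Sub u uA); apply: val_inj; rewrite phi1E SubK.
Qed.

Lemma psi1_inj : injective psi1.
Proof.
move=> [o1 p1] [o2 p2] /(congr1 val) /= eq12; apply: val_inj => /=.
by case: o1 o2 {p1 p2} eq12 => [t1|] [t2|] //= [/psi_inj /val_inj ->].
Qed.

Lemma psi1_onto e : phi1 (endpts e).1 != phi1 (endpts e).2 -> exists o, psi1 o = e.
Proof.
have [_ _ psi_onto _] := contr.
move=> ne; case E: (val e) => [e'|].
  have: phi (endpts (val e')).1 != phi (endpts (val e')).2.
    apply: contraNneq ne; rewrite (endpts_old_redge E) => phi_eq.
    by apply/eqP/val_inj; rewrite !phi1E.
  case/psi_onto => t psi_t; case/and3P: (valP e') => e'F in1 in2.
  have old_t : [&& t \notin [set a; b], (endpts t).1 \in TA & (endpts t).2 \in TA].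
    rewrite psi_ends psi_t /= !mem_rcomp_phi in1 in2 !andbT.
    by rewrite -(mem_imset _ _ psi_inj) psi_F psi_t.
  exists (old_redge _ _ (Sub t old_t)).
  by apply: val_inj; rewrite E; congr Some; apply: val_inj.
have phi_x1x2 : phi x1 != phi x2.
  apply: contraNneq ne => phi_eq; apply/eqP/val_inj; rewrite !phi1E.
  by have [-> ->] := endpts_new_redge E x2_in.
by exists (Sub None phi_x1x2); apply: val_inj; rewrite E.
Qed.

Lemma psi1_ends o : endpts o = (phi1 (endpts (psi1 o)).1, phi1 (endpts (psi1 o)).2).
Proof.
have val_pair (p q : vert T1 * vert T1) : (val p.1, val p.2) = (val q.1, val q.2) -> p = q.
  by case: p q => [? ?] [? ?] [/val_inj -> /val_inj ->].
apply: val_pair; rewrite /= !phi1E; case E: (val o) => [t|].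
  have psi1E : val (psi1 o) = Some (Sub (psi (val t)) (psi_old_edge t)) by rewrite /= E.
  by rewrite -(endpts_old_redge E) psi_ends (endpts_old_redge psi1E).
have psi1E : val (psi1 o) = None by rewrite /= E.
have x2T : phi x2 \in TA by rewrite mem_rcomp_phi.
have [-> ->] := endpts_new_redge E x2T.
by have [-> ->] := endpts_new_redge psi1E x2_in.
Qed.

(* A cut of [G1] lifts to a cut of [G] of the same size: the side of [x1] absorbs
   everything outside [A], so [e1] never crosses and [e2] crosses exactly when
   the new edge [x1 x2] does. *)
Definition lift_set (X : {set vert G1}) : {set vert G} :=
  [set w | if w \in A then insubd x1' w \in X else x1' \in X].

Definition lift_edge (o : edge G1) : edge G := if val o is Some e then val e else e2.

Lemma lift_edge_inj : injective lift_edge.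
Proof.
move=> o o'; rewrite /lift_edge.
case E: (val o) => [e|]; case E': (val o') => [e'|] ee'; apply: val_inj; rewrite E E' //.
- by congr Some; apply: val_inj.
- by case/and3P: (valP e); rewrite ee' e2F.
- by case/and3P: (valP e'); rewrite -ee' e2F.
Qed.

Lemma mem_lift_set X w :
  (w \in lift_set X) = if w \in A then insubd x1' w \in X else x1' \in X.
Proof. by rewrite in_set. Qed.

Lemma mem_lift_set_val X (w : vert G1) : (val w \in lift_set X) = (w \in X).
Proof. by rewrite mem_lift_set (valP w) valKd. Qed.

Lemma lift_edge_crossing X o : (lift_edge o \in crossing (lift_set X)) = (o \in crossing X).
Proof.
rewrite /lift_edge !in_crossing; case E: (val o) => [e|].
  by rewrite (endpts_old_redge E) /= !mem_lift_set_val.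
have [o1 o2] := endpts_new_redge E x2_in.
have -> : (endpts o).1 = x1' by apply: val_inj; rewrite o1.
have -> : (endpts o).2 = insubd x1' x2 by apply: val_inj; rewrite o2 insubdK.
by case/orP: e2_ends => /eqP -> /=; rewrite !mem_lift_set x2_in (negbTE y2_out) // eq_sym.
Qed.

Lemma crossing_lift_set_onto X e : e \in crossing (lift_set X) -> exists o, lift_edge o = e.
Proof.
rewrite in_crossing !mem_lift_set => cross_e.
have [eF | eF] := boolP (e \in F).
  move: eF cross_e; rewrite in_set2 => /orP [] /eqP ->; last by exists (Sub None isT).
  have x1'E : insubd x1' x1 = x1' by apply: val_inj; rewrite insubdK // r_in_rcomp.
  by case/orP: e1_ends => /eqP -> /=; rewrite r_in_rcomp (negbTE y1_out) x1'E eqxx.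
have [e1A | e1A] := boolP ((endpts e).1 \in A); last first.
  by move: cross_e; rewrite -(rcomp_endpts x1 eF) (negbTE e1A) eqxx.
have olde : [&& e \notin F, (endpts e).1 \in A & (endpts e).2 \in A].
  by rewrite eF e1A -(rcomp_endpts x1 eF) e1A.
by exists (old_redge _ _ (Sub e olde)).
Qed.

Lemma card_crossing_lift_set X : #|crossing (lift_set X)| = #|crossing X|.
Proof.
suff -> : crossing (lift_set X) = lift_edge @: crossing X.
  by rewrite card_imset //; exact: lift_edge_inj.
apply/setP => e; apply/idP/imsetP => [cross_e | [o o_cross ->]].
  have [o eo] := crossing_lift_set_onto cross_e.
  by exists o; rewrite // -lift_edge_crossing eo.
by rewrite lift_edge_crossing.
Qed.

Lemma contraction_phi1 : contraction phi1 psi1.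
Proof.
by split; [exact: phi1_onto | exact: psi1_inj | exact: psi1_onto | exact: psi1_ends].
Qed.

Lemma phi1_classes_uncut u v (X : {set vert G1}) :
  phi1 u = phi1 v -> u \in X -> v \notin X -> #|crossing X| != 2.
Proof.
move=> /(congr1 val); rewrite !phi1E => /phi_lambda uv uX vX.
have := uv (lift_set X); rewrite !mem_lift_set_val card_crossing_lift_set uX (negbTE vX).
by move=> /(_ isT isT); apply: contraTneq => ->.
Qed.

Lemma cactus_T1 : cactus T1.
Proof.
apply: (reduce_cactus (ra := phi y1) (sb := phi y2) (D := D)); rewrite ?mem_rcomp_phi //.
- by apply: contraNneq e1_neq_e2 => ab; rewrite -psi_a -psi_b ab.
- by case/orP: e1_ends => /eqP ends; rewrite psi_ends psi_a ends; [left | right].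
- by case/orP: e2_ends => /eqP ends; rewrite psi_ends psi_b ends; [left | right].
Qed.

Lemma reduce_side_cactus_rep2 :
  exists phi1 : vert G1 -> vert T1,
    (forall v, val (phi1 v) = phi (val v)) /\ cactus_rep2 phi1.
Proof.
exists phi1; split; first exact: phi1E.
exact: cactus_rep2_contraction contraction_phi1 cactus_T1 phi1_classes_uncut.
Qed.

End ReductionSide.

Theorem lemma5
  (G T : mgraph) (phi : vert G -> vert T) (psi : edge T -> edge G)
  (* G: connected bridgeless cubic with at least one 2-edge-cut *)
  (hconn : connected G) (hbl : bridgeless G) (hcub : cubic G)
  (h2 : exists F : {set edge G}, two_edge_cut F)
  (* (T, phi): contraction of the 3-edge-connected components of G *)
  (hphi_surj : forall t : vert T, exists u, phi u = t)
  (hphi : forall u v : vert G, phi u = phi v <-> lambda_ge 3 u v)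
  (hpsi_inj : injective psi)
  (hpsi_im : forall e : edge G,
      phi (endpts e).1 != phi (endpts e).2 <-> exists t, psi t = e)
  (hT_ends : forall t : edge T,
      endpts t = (phi (endpts (psi t)).1, phi (endpts (psi t)).2))
  (hcyc : forall t1 t2 : edge T, t1 != t2 ->
      two_edge_cut [set psi t1; psi t2] <->
      exists C : {set edge T}, [/\ is_cycle C, t1 \in C & t2 \in C])
  (hrep : cactus_rep2 phi)
  (* the 2-edge-cut {e1, e2} of G and the corresponding {a, b} of T *)
  (e1 e2 : edge G) (x1 y1 x2 y2 : vert G) (a b : edge T)
  (hcut : two_edge_cut [set e1; e2])
  (he1 : (endpts e1 == (x1, y1)) || (endpts e1 == (y1, x1)))
  (he2 : (endpts e2 == (x2, y2)) || (endpts e2 == (y2, x2)))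
  (hx : connect (adj [set e1; e2]) x1 x2)
  (hy : connect (adj [set e1; e2]) y1 y2)
  (hxy : ~~ connect (adj [set e1; e2]) x1 y1)
  (ha : psi a = e1) (hb : psi b = e2) :
  let G1 := reduce [set e1; e2] x1 x2 false in
  let G2 := reduce [set e1; e2] y1 y2 false in
  let T1 := reduce [set a; b] (phi x1) (phi x2) true in
  let T2 := reduce [set a; b] (phi y1) (phi y2) true in
  (exists phi1 : vert G1 -> vert T1,
     (forall v : vert G1, val (phi1 v) = phi (val v)) /\ cactus_rep2 phi1) /\
  (exists phi2 : vert G2 -> vert T2,
     (forall v : vert G2, val (phi2 v) = phi (val v)) /\ cactus_rep2 phi2).
Proof.
move=> G1 G2 T1 T2; have [cactusT _] := hrep.
have contr : contraction phi psi by split=> // e /hpsi_im.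
have phi_lambda u v : phi u = phi v -> lambda_ge 3 u v by move/hphi.
have e1_neq_e2 : e1 != e2 by case: hcut => _; rewrite cards2; case: (e1 != e2).
have [D [cycD aD bD]] : exists D, [/\ is_cycle D, a \in D & b \in D].
  apply/hcyc; last by rewrite ha hb.
  by apply: contraNneq e1_neq_e2 => ab; rewrite -ha -hb ab.
have side := reduce_side_cactus_rep2 contr cactusT phi_lambda e1_neq_e2.
split; first exact: side he1 he2 hx hy hxy ha hb cycD aD bD.
by apply: side hy hx _ ha hb cycD aD bD; rewrite 1?orbC // connect_adjC.
Qed.
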